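(* Let $n\ge 2$. For $k\in\mathbb{N}$ let $\bar c_k := c_k^{\mathrm{EH}}/\bigl(\bigl[\tfrac{k+n-1}{n}\bigr]\pi\bigr)$ be the normalized $k$-th Ekeland–Hofer capacity on ellipsoids in $\mathbb{R}^{2n}$. Then, as $k\to\infty$, $\bar c_k$ converges uniformly on ellipsoids to the normalized symplectic capacity $c_\infty$ given by $$c_\infty\bigl(E(a_1,\dots,a_n)\bigr)=\frac{n}{1/a_1+\dots+1/a_n},$$ in the sense that $$\sup\Bigl\{\bigl|\bar c_k\bigl(E(a_1,\dots,a_{n-1},1)\bigr)-c_\infty\bigl(E(a_1,\dots,a_{n-1},1)\bigr)\bigr| \;:\; 0<a_1\le\dots\le a_{n-1}\le 1\Bigr\}\longrightarrow 0 \quad (k\to\infty).$$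
   Context: For $0<a_1\le\dots\le a_n\le\infty$, the ellipsoid is $E(a_1,\dots,a_n)=\{z\in\mathbb{C}^n : \sum_j |z_j|^2/a_j<1\}\subset\mathbb{R}^{2n}$ with the standard symplectic form. The Ekeland–Hofer capacities $c_1^{\mathrm{EH}}\le c_2^{\mathrm{EH}}\le\dots$ take the following values on ellipsoids: writing the numbers $m\,a_i\pi$ ($m\in\mathbb{N}$, $1\le i\le n$) in increasing order, with repetitions, as $d_1\le d_2\le\dots$, one has $c_k^{\mathrm{EH}}(E(a_1,\dots,a_n))=d_k$. $[x]$ denotes the largest integer $\le x$. A capacity is normalized if it takes the value $1$ on the unit ball $B^{2n}(1)=E(1,\dots,1)$. *)

From mathcomp Require Import all_boot all_order all_algebra.
From mathcomp Require Import all_classical all_reals all_analysis.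
Set Implicit Arguments. Unset Strict Implicit. Unset Printing Implicit Defensive.
Import Order.TTheory GRing.Theory Num.Theory.
Local Open Scope classical_set_scope.
Local Open Scope ring_scope.

(* An ellipsoid E(a_1,...,a_n) with finite positive parameters is encoded by
   its parameter vector a : 'I_n -> R. *)

(* ehCount a t = #{ (m,i) : m >= 1, 1 <= i <= n, m * a_i * pi <= t }
   (for t >= 0 and a_i > 0; the i-th summand is the number of m >= 1 with
   m <= t / (a_i pi), i.e. the truncation of t/(a_i pi)). *)
Definition ehCount {R : realType} (n : nat) (a : 'I_n -> R) (t : R) : nat :=
  (\sum_(i < n) Num.truncn (t / (a i * pi)))%N.

(* k-th Ekeland-Hofer capacity of E(a): the k-th term d_k (k >= 1) of the
   numbers m a_i pi (m >= 1) listed in increasing order with repetitions,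
   i.e. the smallest t such that at least k of these numbers are <= t. *)
Definition cEH {R : realType} (n : nat) (k : nat) (a : 'I_n -> R) : R :=
  inf [set t : R | (k <= ehCount a t)%N].

Definition cEHbar {R : realType} (n : nat) (k : nat) (a : 'I_n -> R) : R :=
  cEH k a / (((k + n - 1) %/ n)%N%:R * pi).

Definition cInf {R : realType} (n : nat) (a : 'I_n -> R) : R :=
  n%:R / (\sum_(i < n) (a i)^-1).

From mathcomp Require Import all_boot all_order all_algebra.
From mathcomp Require Import all_classical all_reals all_analysis.
From mathcomp Require Import ring lra zify.
Set Implicit Arguments. Unset Strict Implicit. Unset Printing Implicit Defensive.
Import Order.TTheory GRing.Theory Num.Theory.
Local Open Scope ring_scope.

(* With s = 1/a_1 + ... + 1/a_n, the number N(t) of values m a_i pi <= t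
   satisfies t s / pi - n <= N(t) <= t s / pi, so c_k s / pi lies in
   [k, k + n].  The normalizing integer M = [(k+n-1)/n] is the ceiling of
   k/n, so n M lies in the same interval; hence
   |c_k / (M pi) - n / s| <= n / (s M).  When every a_i <= 1 we have s >= n,
   so s M >= k and the error is at most n / k, uniformly in a. *)

Lemma ceil_divn_bounds n k : (0 < n)%N -> (k <= n * ((k + n - 1) %/ n) < k + n)%N.
Proof. by move=> n_gt0; apply/andP; split; lia. Qed.

Section EkelandHoferCount.
Variables (R : realType) (n : nat) (a : 'I_n -> R).
Hypotheses (n_gt0 : (0 < n)%N) (a_gt0 : forall i, 0 < a i).
Local Notation s := (\sum_(i < n) (a i)^-1).

Let summandE t i : t / pi * (a i)^-1 = t / (a i * pi).
Proof. by rewrite invfM mulrA mulrAC. Qed.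

Lemma ehCount_le t : 0 <= t -> (ehCount a t)%:R <= t / pi * s.
Proof.
move=> t_ge0; rewrite /ehCount natr_sum mulr_sumr; apply: ler_sum => i _.
by rewrite summandE truncn_le divr_ge0 // mulr_ge0 ?pi_ge0 // ltW.
Qed.

Lemma ehCount_ge t : t / pi * s <= (ehCount a t + n)%:R.
Proof.
rewrite /ehCount natrD natr_sum mulr_sumr -[n in n%:R]card_ord -sumr_const.
rewrite -big_split /=; apply: ler_sum => i _.
by rewrite summandE natr1 ltW // truncnS_gt.
Qed.

Lemma ehCount_lt0 t : t < 0 -> ehCount a t = 0%N.
Proof.
move=> t_lt0; rewrite /ehCount big1 // => i _.
apply/eqP; rewrite -leqn0 -(truncn0 R); apply: le_truncn.
by rewrite ltW // pmulr_llt0 // invr_gt0 mulr_gt0 ?pi_gt0.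
Qed.

Let s_gt0 : 0 < s.
Proof.
have : \sum_(i < n) (0 : R) < s.
  apply: ltr_sum => [|i _]; rewrite ?invr_gt0 //.
  by apply/hasP; exists (Ordinal n_gt0); rewrite ?mem_index_enum.
by rewrite big1.
Qed.

Let pi_gt0R : (0 : R) < pi := pi_gt0 R.

Let ge_scaled x t : (x <= t / pi * s) = (x / s * pi <= t).
Proof. by rewrite -ler_pdivrMr // ler_pdivlMr. Qed.

Let le_scaled x t : (t / pi * s <= x) = (t <= x / s * pi).
Proof. by rewrite -ler_pdivlMr // ler_pdivrMr. Qed.

Lemma cEH_scaled_bounds k : (0 < k)%N ->
  k%:R <= cEH k a / pi * s <= (k + n)%:R.
Proof.
move=> k_gt0; set S := [set t : R | (k <= ehCount a t)%N]%classic.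
have S_lb : lbound S (k%:R / s * pi).
  move=> t St; rewrite -ge_scaled.
  have t_ge0 : 0 <= t.
    rewrite leNgt; apply/negP => /ehCount_lt0 t0.
    by move: St; rewrite /S /= t0 leqn0 => /eqP k0; rewrite k0 in k_gt0.
  by apply: le_trans (ehCount_le t_ge0); rewrite ler_nat.
set t1 := (k + n)%:R / s * pi.
have S_t1 : S t1.
  rewrite /S /= -(leq_add2r n) -(ler_nat R); apply: le_trans (ehCount_ge t1).
  by rewrite ge_scaled.
rewrite ge_scaled le_scaled; apply/andP; split.
- by apply: lb_le_inf => //; exists t1.
- by apply: ge_inf => //; exists (k%:R / s * pi).
Qed.

Lemma cEHbar_cInf_dist k : (0 < k)%N ->
  `|cEHbar k a - cInf a| <= n%:R / (s * ((k + n - 1) %/ n)%:R).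
Proof.
move=> k_gt0; rewrite /cEHbar /cInf; set M := ((k + n - 1) %/ n)%N.
have /andP[kM Mk] := ceil_divn_bounds k n_gt0; rewrite -/M in kM Mk.
have M_gt0 : (0 : R) < M%:R.
  by rewrite ltr0n lt0n; apply: contraTneq kM => ->; rewrite muln0 -ltnNge.
have /andP[cEH_ge cEH_le] := cEH_scaled_bounds k_gt0.
set u := cEH k a / pi * s in cEH_ge cEH_le.
have -> : cEH k a / (M%:R * pi) - n%:R / s = (u - (n * M)%:R) / (s * M%:R).
  (* [field] would unfold [pi]; abstract it first. *)
  rewrite /u natrM; move: (pi : R) (M%:R : R) pi_gt0R M_gt0 => p m p_gt0 m_gt0.
  by field; rewrite !gt_eqF.
rewrite normrM normfV (gtr0_norm (mulr_gt0 s_gt0 M_gt0)).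
rewrite ler_pM2r ?invr_gt0 ?mulr_gt0 //.
rewrite -(ler_nat R) in kM; rewrite -(ltr_nat R) natrD in Mk.
by rewrite ler_norml; apply/andP; split; lra.
Qed.

Lemma cEHbar_cInf_dist_le k : (forall i, a i <= 1) -> (0 < k)%N ->
  `|cEHbar k a - cInf a| <= n%:R / k%:R.
Proof.
move=> a_le1 k_gt0; apply: le_trans (cEHbar_cInf_dist k_gt0) _.
have n_le_s : n%:R <= s.
  rewrite -[n in n%:R]card_ord -sumr_const; apply: ler_sum => i _.
  by rewrite invf_ge1.
set M := ((k + n - 1) %/ n)%N; have /andP[kM _] := ceil_divn_bounds k n_gt0.
have k_le_sM : k%:R <= s * M%:R.
  apply: le_trans (_ : (n * M)%:R <= _); first by rewrite ler_nat.
  by rewrite natrM ler_wpM2r.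
have k_gt0R : (0 : R) < k%:R by rewrite ltr0n.
by rewrite ler_pM2l ?ltr0n // lef_pV2 ?posrE // (lt_le_trans k_gt0R).
Qed.

End EkelandHoferCount.

Theorem mainTheorem1 (R : realType) (n : nat) (hn : (2 <= n)%N) :
  forall eps : R, 0 < eps ->
  exists K : nat, forall k : nat, (K <= k)%N ->
    forall a : 'I_n -> R,
      (forall i : 'I_n, 0 < a i) ->
      (forall i j : 'I_n, (i <= j)%N -> a i <= a j) ->
      (forall i : 'I_n, val i = n.-1 -> a i = 1) ->
      `| cEHbar k a - cInf a | <= eps.
Proof.
move=> eps eps_gt0; exists (Num.truncn (n%:R / eps)).+1.
move=> k k_large a a_gt0 a_sorted a_last.
have n_gt0 : (0 < n)%N by apply: leq_trans hn.
have k_gt0 : (0 < k)%N by apply: leq_trans k_large.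
have a_le1 i : a i <= 1.
  have last_lt : (n.-1 < n)%N by rewrite prednK.
  rewrite -(a_last (Ordinal last_lt)) //; apply: a_sorted.
  by rewrite -ltnS prednK.
apply: le_trans (cEHbar_cInf_dist_le n_gt0 a_gt0 a_le1 k_gt0) _.
rewrite ler_pdivrMr ?ltr0n // mulrC -ler_pdivrMr //.
by apply/ltW/(lt_le_trans (truncnS_gt _)); rewrite ler_nat.
Qed.
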